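(* (1) Let $\mu>0$, $\rho>0$, and let $(x^*,s^* )\in\mathbb{R}^n\times\mathbb{R}^m$ be a local solution of the minimax problem $\min_{x\in\mathbb{R}^n}\max_{s\in\mathbb{R}^m}F(x,s;\mu,\rho)$, in the sense that $x^*$ is a local minimizer of $F(\cdot,s^*;\mu,\rho)$ and $s^*$ is a local maximizer of $F(x^*,\cdot;\mu,\rho)$. Then $$\nabla f(x^* )-\nabla c(x^* )s^*=0,\qquad c(x^* )-z^*=0,$$ where $z^*=z(x^*,s^*;\mu,\rho)$. (2) Let $\rho>0$ and suppose $(x^*,s^* )$ satisfies $\nabla f(x^* )-\nabla c(x^* )s^*=0$ and $c(x^* )-z^*=0$ with $z^*=z(x^*,s^*;0,\rho)$, i.e. $z_i^*=\frac{1}{2\rho}\big(|s_i^*-\rho c_i(x^* )|-(s_i^*-\rho c_i(x^* ))\big)$. Then $(x^*,s^* )$ is a KKT pair of problem (P): $\min f(x)$ s.t. $c(x)\ge0$, i.e. $\nabla f(x^* )-\nabla c(x^* )s^*=0$, $c(x^* )\ge 0$, $s^*\ge 0$, $c_i(x^* )s_i^*=0$ for all $i$.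
   Context: Let $f:\mathbb{R}^n\to\mathbb{R}$ and $c=(c_1,\dots,c_m):\mathbb{R}^n\to\mathbb{R}^m$ be twice continuously differentiable; $\nabla c(x)\in\mathbb{R}^{n\times m}$ denotes the matrix whose $i$-th column is $\nabla c_i(x)$. For parameters $\mu\ge0$, $\rho>0$ and variables $x\in\mathbb{R}^n$, $s\in\mathbb{R}^m$, define for $i=1,\dots,m$: $z_i(x,s;\mu,\rho)=\frac{1}{2\rho}\big(\sqrt{(s_i-\rho c_i(x))^2+4\rho\mu}-(s_i-\rho c_i(x))\big)$, $y_i(x,s;\mu,\rho)=\frac{1}{2\rho}\big(\sqrt{(s_i-\rho c_i(x))^2+4\rho\mu}+(s_i-\rho c_i(x))\big)$, and, for $\mu>0$, $h_i(x,s;\mu,\rho)=-\mu\ln z_i(x,s;\mu,\rho)+\frac{\rho}{2}y_i(x,s;\mu,\rho)^2-\frac{1}{2\rho}s_i^2$ and the augmented Lagrangian $F(x,s;\mu,\rho)=f(x)+\sum_{i=1}^m h_i(x,s;\mu,\rho)$. *)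

From HB Require Import structures.
From mathcomp Require Import all_boot all_order all_algebra.
From mathcomp Require Import all_classical all_reals all_analysis.
Set Implicit Arguments. Unset Strict Implicit. Unset Printing Implicit Defensive.
Import Order.TTheory GRing.Theory Num.Theory.
Import numFieldNormedType.Exports.
Local Open Scope ring_scope.

Section Defs.
Variable R : realType.

Definition basisv (n : nat) (j : 'I_n) : 'rV[R]_n := delta_mx 0 j.

Definition partial (n : nat) (g : 'rV[R]_n -> R) (j : 'I_n) : 'rV[R]_n -> R :=
  fun x => 'D_(basisv j) g x.

Definition C2 (n : nat) (g : 'rV[R]_n -> R) : Prop :=
  (forall j x, derivable g x (basisv j)) /\
  (forall j, continuous (partial g j)) /\
  (forall j k x, derivable (partial g j) x (basisv k)) /\
  (forall j k, continuous (partial (partial g j) k)).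

Variables (n m : nat) (c : 'I_m -> 'rV[R]_n -> R).

Definition zfun (mu rho : R) (x : 'rV[R]_n) (s : 'rV[R]_m) (i : 'I_m) : R :=
  let w := s 0 i - rho * c i x in
  (Num.sqrt (w ^+ 2 + 4 * rho * mu) - w) / (2 * rho).

Definition yfun (mu rho : R) (x : 'rV[R]_n) (s : 'rV[R]_m) (i : 'I_m) : R :=
  let w := s 0 i - rho * c i x in
  (Num.sqrt (w ^+ 2 + 4 * rho * mu) + w) / (2 * rho).

Definition hfun (mu rho : R) (x : 'rV[R]_n) (s : 'rV[R]_m) (i : 'I_m) : R :=
  - mu * ln (zfun mu rho x s i) + rho / 2 * (yfun mu rho x s i) ^+ 2
  - (s 0 i) ^+ 2 / (2 * rho).

Definition Faug (f : 'rV[R]_n -> R) (mu rho : R) (x : 'rV[R]_n) (s : 'rV[R]_m) : R :=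
  f x + \sum_(i < m) hfun mu rho x s i.

Definition stationary (f : 'rV[R]_n -> R) (x : 'rV[R]_n) (s : 'rV[R]_m) : Prop :=
  forall j : 'I_n, partial f j x - \sum_(i < m) partial (c i) j x * s 0 i = 0.
End Defs.

From HB Require Import structures.
From mathcomp Require Import all_boot all_order all_algebra.
From mathcomp Require Import all_classical all_reals all_analysis.
From mathcomp Require Import ring lra.
Import Order.TTheory GRing.Theory Num.Theory.
Import numFieldNormedType.Exports.
Local Open Scope ring_scope.
Local Open Scope classical_set_scope.
Set Implicit Arguments. Unset Strict Implicit.

(* Writing w_i = s_i - rho c_i(x), each term of F is
   Phi(w_i) - s_i^2/(2 rho), where Phi(w) = -mu ln z(w) + rho/2 y(w)^2 and
   z, y are as in the definition of F (both positive, since mu > 0).  The key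
   computation is Phi' = y (using y - z = w/rho, y + z = sqrt(w^2+4 rho mu)/rho
   and rho y z = mu).  Restricting F to coordinate lines through (xs, ss), the
   one-variable Fermat rule gives: along s_i, y_i - s_i/rho = 0, i.e. the
   multiplier identity rho y_i = s_i; along x_j, grad f - sum rho y_i grad c_i = 0,
   which with the multiplier identity is stationarity; finally c - z =
   c - (y - w/rho) = 0.

   Part (2).  For mu = 0 the condition c = z reads
   a = (|b - rho a| - (b - rho a)) / (2 rho) with a = c_i(xs), b = s_i, and a
   sign analysis of b - rho a yields a >= 0, b >= 0, a b = 0. *)

Section Fermat.
Variable R : realType.

(* Fermat's rule at 0: a local maximum where the derivative exists is a
   critical point.  The difference quotient converges to d from both sides and
   is <= 0 on the right, >= 0 on the left. *)
Lemma derive_local_max (g : R -> R) (d : R) :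
  (\forall t \near 0, g t <= g 0) -> is_derive (0 : R) (1 : R) g d -> d = 0.
Proof.
move=> gmax [dg <-].
have quot : (fun h => h^-1 * (g h - g 0)) @ 0^' --> 'D_1 g 0.
  apply: cvg_trans dg; apply: near_eq_cvg; near=> h.
  by rewrite /= addr0 [h *: 1]mulr1.
apply/eqP; rewrite eq_le; apply/andP; split.
- apply: (ler_cvg_to (cvg_dnbhs_at_right quot) (cvg_cst 0)).
  near=> h; apply: mulr_ge0_le0.
    by rewrite invr_ge0 ltW //; near: h; exact: nbhs_right_gt.
  by rewrite subr_le0; near: h; exact: cvg_within gmax.
- apply: (ler_cvg_to (cvg_cst 0) (cvg_dnbhs_at_left quot)).
  near=> h; apply: mulr_le0.
    by rewrite invr_le0 ltW //; near: h; exact: nbhs_left_lt.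
  by rewrite subr_le0; near: h; exact: cvg_within gmax.
Unshelve. all: by end_near. Qed.

Lemma derive_local_min (g : R -> R) (d : R) :
  (\forall t \near 0, g 0 <= g t) -> is_derive (0 : R) (1 : R) g d -> d = 0.
Proof.
move=> gmin dg; apply: oppr_inj; rewrite oppr0.
apply: (derive_local_max (g := fun t => - g t)) => //.
by near=> t; rewrite lerN2; near: t.
Unshelve. all: by end_near. Qed.
End Fermat.

(* One-dimensional penalty-barrier function: for fixed mu, rho > 0 and
   w = s_i - rho c_i(x), the functions z, y of the paper are zpen w, ypen w. *)
Section Penalty.
Variables (R : realType) (mu rho : R).
Hypotheses (mu_gt0 : 0 < mu) (rho_gt0 : 0 < rho).

Definition disc (w : R) : R := Num.sqrt (w ^+ 2 + 4 * rho * mu).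
Definition zpen (w : R) : R := (disc w - w) / (2 * rho).
Definition ypen (w : R) : R := (disc w + w) / (2 * rho).
(* The part of h_i that depends on s_i and x only through w. *)
Definition Phi (w : R) : R := - mu * ln (zpen w) + rho / 2 * ypen w ^+ 2.

Lemma disc_arg_gt0 (w : R) : 0 < w ^+ 2 + 4 * rho * mu.
Proof. by rewrite ltr_wpDl ?sqr_ge0 // !mulr_gt0. Qed.

Lemma abs_lt_disc (w : R) : `|w| < disc w.
Proof. by rewrite -sqrtr_sqr ltr_sqrt ?disc_arg_gt0 // ltrDl !mulr_gt0. Qed.

Lemma disc_gt0 (w : R) : 0 < disc w.
Proof. exact: le_lt_trans (normr_ge0 w) (abs_lt_disc w). Qed.

(* z > 0, so the logarithm in h_i is always well defined. *)
Lemma zpen_gt0 (w : R) : 0 < zpen w.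
Proof.
rewrite divr_gt0 ?mulr_gt0 // subr_gt0.
exact: le_lt_trans (ler_norm w) (abs_lt_disc w).
Qed.

Lemma ypen_sub_zpen (w : R) : ypen w - zpen w = w / rho.
Proof. by rewrite /ypen /zpen; field; rewrite gt_eqF. Qed.

Lemma ypen_add_zpen (w : R) : ypen w + zpen w = disc w / rho.
Proof. by rewrite /ypen /zpen; field; rewrite gt_eqF. Qed.

Lemma ypen_mul_zpen (w : R) : rho * (ypen w * zpen w) = mu.
Proof.
have disc2 : disc w ^+ 2 = w ^+ 2 + 4 * rho * mu.
  by rewrite sqr_sqrtr // ltW // disc_arg_gt0.
rewrite /ypen /zpen -/(disc w); move: disc2; set S := disc w; clearbody S => disc2.
have -> : mu = (S ^+ 2 - w ^+ 2) / (4 * rho).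
  by rewrite disc2; field; rewrite gt_eqF.
by field; rewrite gt_eqF.
Qed.

Lemma disc_deriv (w : R) : is_derive w 1 disc (w / disc w).
Proof.
have sq : is_derive w (1 : R) (fun u : R => u ^+ 2 + 4 * rho * mu) (2 * w).
  by apply: is_derive_eq; rewrite ![_%:A]mulr1; ring.
have := @is_derive1_comp _ Num.sqrt _ w _ _ (is_derive1_sqrt (disc_arg_gt0 w)) sq.
rewrite -/(disc w) => /is_derive_eq; apply.
by field; rewrite gt_eqF ?disc_gt0.
Qed.

Lemma zpen_deriv (w : R) : is_derive w 1 zpen (- zpen w / disc w).
Proof.
have ddisc := disc_deriv w.
rewrite /zpen; apply: is_derive_eq.
by rewrite -/(disc w) scaler0 add0r -[_ *: _]/(_ * _); field; rewrite !gt_eqF ?disc_gt0.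
Qed.

Lemma ypen_deriv (w : R) : is_derive w 1 ypen (ypen w / disc w).
Proof.
have ddisc := disc_deriv w.
rewrite /ypen; apply: is_derive_eq.
by rewrite -/(disc w) scaler0 add0r -[_ *: _]/(_ * _); field; rewrite !gt_eqF ?disc_gt0.
Qed.

(* Phi' = y: indeed Phi' = mu/disc + rho y^2/disc = (rho y z + rho y^2)/disc
   = y.  This identity is what turns y into the Lagrange multiplier. *)
Lemma Phi_deriv (w : R) : is_derive w 1 Phi (ypen w).
Proof.
have dz := zpen_deriv w; have dy := ypen_deriv w.
have dlnz := is_derive1_comp (is_derive1_ln (zpen_gt0 w)) dz.
have disc_eq : disc w = rho * (ypen w + zpen w).
  by rewrite ypen_add_zpen; field; rewrite gt_eqF.
have yz0 : ypen w + zpen w != 0.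
  by rewrite ypen_add_zpen gt_eqF // divr_gt0 ?disc_gt0.
rewrite /Phi; apply: is_derive_eq.
rewrite -![_ *: _]/(_ * _) disc_eq -(ypen_mul_zpen w).
by field; rewrite yz0 !gt_eqF ?zpen_gt0.
Qed.
End Penalty.

Section Lines.
Variable R : realType.

Lemma is_derive_line (k : nat) (g : 'rV[R]_k -> R) (a v : 'rV[R]_k) :
  derivable g a v -> is_derive (0 : R) (1 : R) (fun t => g (a + t *: v)) ('D_v g a).
Proof.
move=> dg.
have quotE : (fun h : R => h^-1 *: (((fun t => g (a + t *: v)) \o shift 0) (h *: 1)
      - g (a + 0 *: v))) = (fun h => h^-1 *: ((g \o shift a) (h *: v) - g a)).
  by apply/funext => h /=; rewrite scale0r !addr0 [h *: 1]mulr1 [h *: v + a]addrC.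
by split; rewrite /derivable /derive quotE.
Qed.

Lemma near_line (k : nat) (P : 'rV[R]_k -> Prop) (a v : 'rV[R]_k) :
  (\forall x \near a, P x) -> \forall t \near (0 : R), P (a + t *: v).
Proof.
have line_cvg : (fun t : R => a + t *: v) @ (0 : R) --> a.
  rewrite -[X in _ --> X]addr0 -[X in _ + X](scale0r v).
  by apply: cvgD; [exact: cvg_cst | apply: cvgZr_tmp; exact: cvg_id].
exact: line_cvg.
Qed.
End Lines.

Section AugmentedLagrangian.
Variables (R : realType) (n m : nat).
Variables (f : 'rV[R]_n -> R) (c : 'I_m -> 'rV[R]_n -> R) (mu rho : R).
Hypotheses (mu_gt0 : 0 < mu) (rho_gt0 : 0 < rho).

Lemma yfunE (x : 'rV[R]_n) (s : 'rV[R]_m) (k : 'I_m) :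
  yfun c mu rho x s k = ypen mu rho (s 0 k - rho * c k x).
Proof. by []. Qed.

Lemma zfunE (x : 'rV[R]_n) (s : 'rV[R]_m) (k : 'I_m) :
  zfun c mu rho x s k = zpen mu rho (s 0 k - rho * c k x).
Proof. by []. Qed.

(* Chain rule for F along a differentiable curve t |-> (x t, s t):
   d/dt h_k = y_k (s_k' - rho c_k') - s_k s_k' / rho, since Phi' = y. *)
Lemma Faug_line_deriv (x : R -> 'rV[R]_n) (s : R -> 'rV[R]_m)
    (df : R) (dc ds : 'I_m -> R) :
  is_derive (0 : R) (1 : R) (fun t => f (x t)) df ->
  (forall k, is_derive (0 : R) (1 : R) (fun t => c k (x t)) (dc k)) ->
  (forall k, is_derive (0 : R) (1 : R) (fun t => s t 0 k) (ds k)) ->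
  is_derive (0 : R) (1 : R) (fun t => Faug c f mu rho (x t) (s t))
    (df + \sum_(k < m) (yfun c mu rho (x 0) (s 0) k * (ds k - rho * dc k)
                        - s 0 0 k / rho * ds k)).
Proof.
move=> dfx dck dsk.
pose h k t := Phi mu rho (s t 0 k - rho * c k (x t)) - s t 0 k ^+ 2 / (2 * rho).
have -> : (fun t => Faug c f mu rho (x t) (s t)) = (fun t => f (x t)) + \sum_(k < m) h k.
  by apply/funext => t; rewrite /Faug fct_sumE.
apply: is_deriveD => //; apply: is_derive_sum => k.
have ds_k := dsk k; have dc_k := dck k.
have dw : is_derive (0 : R) (1 : R) (fun t => s t 0 k - rho * c k (x t)) (ds k - rho * dc k).
  by apply: is_derive_eq.
have dPhi := @is_derive1_comp _ (Phi mu rho) _ 0 _ _ (Phi_deriv mu_gt0 rho_gt0 _) dw.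
rewrite /h; apply: is_derive_eq.
rewrite -![_ *: _]/(_ * _) mulr0 add0r yfunE.
by field; rewrite gt_eqF.
Qed.

Lemma Faug_deriv_s (x : 'rV[R]_n) (s : 'rV[R]_m) (i : 'I_m) :
  is_derive (0 : R) (1 : R) (fun t => Faug c f mu rho x (s + t *: basisv R i))
    (yfun c mu rho x s i - s 0 i / rho).
Proof.
have ds k : is_derive (0 : R) (1 : R) (fun t => (s + t *: basisv R i) 0 k) (k == i)%:R.
  have -> : (fun t => (s + t *: basisv R i) 0 k) = (fun t => s 0 k + t * (k == i)%:R).
    by apply/funext => t; rewrite !mxE.
  by apply: is_derive_eq; rewrite scaler0 !add0r mul1r [_%:A]mulr1.
have const_x (g : 'rV[R]_n -> R) : is_derive (0 : R) (1 : R) (fun=> g x) 0.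
  exact: is_derive_cst.
apply: is_derive_eq (Faug_line_deriv (const_x f) (fun k => const_x (c k)) ds) _.
rewrite /= scale0r addr0 add0r (bigD1 i) //= big1 => [|k /negbTE ->].
  by rewrite eqxx mulr0 subr0 !mulr1 addr0.
by rewrite mulr0 subr0 !mulr0 subr0.
Qed.

Lemma Faug_deriv_x (x : 'rV[R]_n) (s : 'rV[R]_m) (j : 'I_n) :
  derivable f x (basisv R j) -> (forall k, derivable (c k) x (basisv R j)) ->
  is_derive (0 : R) (1 : R) (fun t => Faug c f mu rho (x + t *: basisv R j) s)
    (partial f j x - \sum_(k < m) rho * yfun c mu rho x s k * partial (c k) j x).
Proof.
move=> df dc.
have const_s k : is_derive (0 : R) (1 : R) (fun=> s 0 k) 0 by exact: is_derive_cst.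
apply: is_derive_eq
  (Faug_line_deriv (is_derive_line df) (fun k => is_derive_line (dc k)) const_s) _.
rewrite /= scale0r addr0 -sumrN; congr (_ + _); apply: eq_bigr => k _.
by rewrite /partial; ring.
Qed.

Lemma saddle_first_order (xs : 'rV[R]_n) (ss : 'rV[R]_m) :
  (forall j, derivable f xs (basisv R j)) ->
  (forall k j, derivable (c k) xs (basisv R j)) ->
  (\forall x \near xs, Faug c f mu rho xs ss <= Faug c f mu rho x ss) ->
  (\forall s \near ss, Faug c f mu rho xs s <= Faug c f mu rho xs ss) ->
  stationary c f xs ss /\ (forall i, c i xs - zfun c mu rho xs ss i = 0).
Proof.
move=> df dc xmin smax.
have multiplier i : rho * yfun c mu rho xs ss i = ss 0 i.
  have smax_i : \forall t \near 0, Faug c f mu rho xs (ss + t *: basisv R i)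
                                   <= Faug c f mu rho xs (ss + 0 *: basisv R i).
    by rewrite scale0r addr0; exact: near_line smax.
  move/eqP: (derive_local_max smax_i (Faug_deriv_s xs ss i)).
  by rewrite subr_eq0 => /eqP ->; field; rewrite gt_eqF.
split=> [j | i].
- have xmin_j : \forall t \near 0, Faug c f mu rho (xs + 0 *: basisv R j) ss
                                  <= Faug c f mu rho (xs + t *: basisv R j) ss.
    by rewrite scale0r addr0; exact: near_line xmin.
  rewrite -[RHS](derive_local_min xmin_j (Faug_deriv_x ss (df j) (dc^~ j))).
  by congr (_ - _); apply: eq_bigr => k _; rewrite multiplier mulrC.
- have yz := ypen_sub_zpen mu rho_gt0 (ss 0 i - rho * c i xs).
  rewrite -yfunE -zfunE in yz.
  have -> : zfun c mu rho xs ss i = yfun c mu rho xs ss i - (ss 0 i - rho * c i xs) / rho.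
    by rewrite -yz; ring.
  have -> : yfun c mu rho xs ss i = ss 0 i / rho.
    by rewrite -(multiplier i); field; rewrite gt_eqF.
  by field; rewrite gt_eqF.
Qed.
End AugmentedLagrangian.

Lemma complementarity_of_fixed_point (R : realType) (rho a b : R) : 0 < rho ->
  a = (`|b - rho * a| - (b - rho * a)) / (2 * rho) ->
  [/\ 0 <= a, 0 <= b & a * b = 0].
Proof.
move=> rho_gt0; have [w_ge0 | w_lt0] := leP 0 (b - rho * a).
- rewrite ger0_norm // subrr mul0r => a0.
  by move: w_ge0; rewrite a0 mulr0 subr0 mul0r.
- rewrite ltr0_norm // => a_eq.
  have two_ra : 2 * rho * a = 2 * rho * a - 2 * b.
    by rewrite {1}a_eq; field; rewrite gt_eqF.
  have b0 : b = 0 by lra.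
  by rewrite b0 mulr0; split => //; nra.
Qed.

Theorem theorem3p1 (R : realType) (n m : nat) (f : 'rV[R]_n -> R)
    (c : 'I_m -> 'rV[R]_n -> R) (hf : C2 f) (hc : forall i, C2 (c i)) :
  (forall (mu rho : R) (xs : 'rV[R]_n) (ss : 'rV[R]_m),
      0 < mu -> 0 < rho ->
      (\forall x \near xs, Faug c f mu rho xs ss <= Faug c f mu rho x ss) ->
      (\forall s \near ss, Faug c f mu rho xs s <= Faug c f mu rho xs ss) ->
      stationary c f xs ss /\
      (forall i, c i xs - zfun c mu rho xs ss i = 0)) /\
  (forall (rho : R) (xs : 'rV[R]_n) (ss : 'rV[R]_m),
      0 < rho ->
      stationary c f xs ss ->
      (forall i, c i xs - zfun c 0 rho xs ss i = 0) ->
      stationary c f xs ss /\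
      (forall i, 0 <= c i xs /\ 0 <= ss 0 i /\ c i xs * ss 0 i = 0)).
Proof.
split=> [mu rho xs ss mu_gt0 rho_gt0 | rho xs ss rho_gt0 stat feas].
  exact: (saddle_first_order mu_gt0 rho_gt0
           (fun j => hf.1 j xs) (fun i j => (hc i).1 j xs)).
split=> // i.
have zfun0 : zfun c 0 rho xs ss i
    = (`|ss 0 i - rho * c i xs| - (ss 0 i - rho * c i xs)) / (2 * rho).
  by rewrite /zfun mulr0 addr0 sqrtr_sqr.
have fixed : c i xs = (`|ss 0 i - rho * c i xs| - (ss 0 i - rho * c i xs)) / (2 * rho).
  by rewrite -zfun0; apply/eqP; rewrite -subr_eq0 feas.
by have [] := complementarity_of_fixed_point rho_gt0 fixed.
Qed.
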